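(* Let $T$ be a binary phylogenetic $X$-tree with $|X| = n \geq 3$. Let $x,y \in X$ with $x \neq y$ such that $x,y$ do not form a cherry in $T$. Let $q = \max\{2, \lfloor (n-1)/2 \rfloor\}$. Then $T$ contains $q$ pairwise edge-disjoint leaf-to-leaf paths $P_1,\ldots,P_q$ such that $x$ is an endpoint of $P_1$ and $y$ is an endpoint of $P_2$.
   Context: A phylogenetic $X$-tree is a tree with no vertices of degree 2 whose leaves are bijectively labelled by (and identified with) $X$; binary means maximum degree 3. Two leaves $x,y$ form a cherry $[x,y]$ if they are adjacent to the same vertex. A leaf-to-leaf path is a path in $T$ whose two endpoints are leaves (distinct) and whose interior vertices are non-leaves. *)

From mathcomp Require Import all_boot.
Set Implicit Arguments. Unset Strict Implicit. Unset Printing Implicit Defensive.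

Definition simple_graph (V : finType) (e : rel V) : Prop :=
  symmetric e /\ irreflexive e.

Definition deg (V : finType) (e : rel V) (v : V) : nat := #|[set w | e v w]|.

Definition is_leaf (V : finType) (e : rel V) (v : V) : bool := deg e v == 1.

(* the leaf set, identified with X *)
Definition leaves (V : finType) (e : rel V) : {set V} := [set v | is_leaf e v].

Definition is_tree (V : finType) (e : rel V) : Prop :=
  simple_graph e /\
  (forall u v : V, connect e u v) /\
  (forall c : seq V, uniq c -> 3 <= size c -> ~~ cycle e c).

Definition binary_phylo_tree (V : finType) (e : rel V) : Prop :=
  is_tree e /\ (forall v : V, deg e v != 2 /\ deg e v <= 3).

Definition cherry (V : finType) (e : rel V) (x y : V) : Prop :=
  is_leaf e x /\ is_leaf e y /\ exists w : V, e x w /\ e y w.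

Definition is_path (V : finType) (e : rel V) (p : seq V) : Prop :=
  match p with
  | [::] => False
  | v :: p' => uniq p /\ path e v p'
  end.

Definition leaf_to_leaf_path (V : finType) (e : rel V) (p : seq V) : Prop :=
  exists (a b : V) (m : seq V),
    p = a :: rcons m b /\ is_path e p /\ a != b /\
    is_leaf e a /\ is_leaf e b /\ all (fun v => ~~ is_leaf e v) m.

Definition endpoint (V : finType) (v : V) (p : seq V) : Prop :=
  exists m : seq V, p = v :: m \/ p = rcons m v.

Definition path_edges (V : finType) (p : seq V) : seq {set V} :=
  [seq [set uv.1; uv.2] | uv <- zip p (behead p)].

Definition edge_disjoint (V : finType) (p1 p2 : seq V) : Prop :=
  ~~ has (fun E => E \in path_edges p2) (path_edges p1).

(* The x-y path has at least three edges: with one edge the tree would have only the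
   two leaves x and y, with two edges x and y would form a cherry.  Deleting its second
   edge z1 z2 splits the tree into a part containing x and a part containing y, and each
   part contains a second leaf of the tree: a maximal path leaving z1 (resp. the neighbour
   of y) through a third neighbour ends at a leaf, as no vertex has degree 2.  Pairing off
   the leaves inside each part along connecting paths gives floor(a/2) + floor(b/2) >= q
   paths with pairwise distinct endpoints, among them x and y, where a + b = n.  Finally
   the paths are uncrossed: if two of them share an edge uv, recombining them at uv gives
   two walks with the same four endpoints and total length smaller by two, so a family of
   minimal total length is edge-disjoint.  All paths stay inside their part, so x and y
   lie on different paths. *)

From mathcomp Require Import all_boot zify.
Set Implicit Arguments. Unset Strict Implicit. Unset Printing Implicit Defensive.

Lemma head_rev (T : Type) (x : T) s : head x (rev s) = last x s.
Proof. by case/lastP: s => //= s a; rewrite rev_rcons last_rcons. Qed.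

Lemma last_rev (T : Type) (x : T) s : last x (rev s) = head x s.
Proof. by case: s => //= a s; rewrite rev_cons last_rcons. Qed.

Lemma head_cat_cons (T : Type) (d : T) s1 u s2 : head d (s1 ++ u :: s2) = head u s1.
Proof. by case: s1. Qed.

Lemma last_cat_cons (T : Type) (d : T) s1 u s2 : last d (s1 ++ u :: s2) = last u s2.
Proof. by rewrite last_cat. Qed.

Lemma sorted_cat_cons (T : Type) (G : rel T) s1 u s2 :
  sorted G (s1 ++ u :: s2) = sorted G (rcons s1 u) && sorted G (u :: s2).
Proof. by case: s1 => [|a s1] //=; rewrite cat_path rcons_path /= andbA. Qed.

Lemma sorted_rev_sym (T : Type) (G : rel T) s :
  symmetric G -> sorted G (rev s) = sorted G s.
Proof. by move=> Gsym; rewrite rev_sorted; apply: eq_sorted => a b; rewrite Gsym. Qed.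

Lemma pairwise_nth_sym (T : Type) (r : rel T) x0 s i j : symmetric r -> pairwise r s ->
  i < size s -> j < size s -> i != j -> r (nth x0 s i) (nth x0 s j).
Proof.
move=> rsym /(pairwiseP x0) rs ilt jlt; case: ltngtP => // [ij|ji] _; first exact: rs.
by rewrite rsym; apply: rs.
Qed.

Lemma perm_pairwise_sym (T : eqType) (r : rel T) s t : symmetric r -> perm_eq s t ->
  pairwise r s = pairwise r t.
Proof.
move=> rsym; elim: s t => [|a s IH] t st; first by case: t st => // b t /perm_size.
have at_ : a \in t by rewrite -(perm_mem st) mem_head.
have st' : perm_eq s (rem a t) by rewrite -(perm_cons a) (perm_trans st) ?perm_to_rem.
suff -> : pairwise r t = pairwise r (a :: rem a t) by rewrite /= (IH _ st') (perm_all _ st').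
elim: t at_ {st st'} => [|b t IHt] //=; rewrite inE.
case: (eqVneq b a) => [-> //|_] /= at_.
rewrite IHt // (perm_all _ (perm_to_rem at_)) /= (rsym b a).
by case: (r a b); rewrite //= andbCA.
Qed.

Lemma not_pairwise (T : eqType) (r : rel T) s : ~~ pairwise r s ->
  exists a b s', perm_eq s [:: a, b & s'] /\ ~~ r a b.
Proof.
elim: s => [|a s IH] //=; rewrite negb_and => /orP [/allPn [b bs nab]|/IH [b [c [s' [ss' nbc]]]]].
  by exists a, b, (rem b s); rewrite perm_cons perm_to_rem.
exists b, c, (a :: s'); split => //.
apply: perm_trans (_ : perm_eq _ [:: a, b, c & s']) _; first by rewrite perm_cons.
by apply/permP => f /=; lia.
Qed.

Definition spath (V : eqType) (G : rel V) (p : seq V) : bool :=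
  [&& 1 < size p, uniq p & sorted G p].

(* The default [d] is irrelevant for the nonempty paths this is applied to. *)
Definition path_ends (V : Type) (d : V) (ps : seq (seq V)) : seq V :=
  flatten [seq [:: head d p; last d p] | p <- ps].

Definition edge_disjointb (V : finType) (p q : seq V) : bool :=
  ~~ has (fun E => E \in path_edges q) (path_edges p).

Definition total_size (T : Type) (ps : seq (seq T)) : nat := sumn [seq size p | p <- ps].

Lemma path_ends_cat (V : Type) (d : V) ps1 ps2 :
  path_ends d (ps1 ++ ps2) = path_ends d ps1 ++ path_ends d ps2.
Proof. by rewrite /path_ends map_cat flatten_cat. Qed.

Lemma perm_path_ends (V : eqType) (d : V) ps ps' :
  perm_eq ps ps' -> perm_eq (path_ends d ps) (path_ends d ps').
Proof. by move=> pps; apply/perm_flatten/perm_map. Qed.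

Lemma path_endsP (V : eqType) (d v : V) ps :
  reflect (exists2 p, p \in ps & v \in [:: head d p; last d p]) (v \in path_ends d ps).
Proof.
apply: (iffP flattenP) => [[s /mapP [p pps ->]]|[p pps vp]]; first by exists p.
by exists [:: head d p; last d p] => //; apply: map_f.
Qed.

Lemma edge_disjointbC (V : finType) : symmetric (@edge_disjointb V).
Proof. by move=> p q; rewrite /edge_disjointb has_sym. Qed.

Lemma mem_path_edges (V : finType) (p : seq V) E : E \in path_edges p ->
  exists s1 s2 u v, p = s1 ++ [:: u, v & s2] /\ E = [set u; v].
Proof.
elim: p => [|a p IH] //; case: p IH => [|b p] IH //.
rewrite /path_edges /= inE => /orP [/eqP ->|/IH [s1 [s2 [u [v [-> ->]]]]]].
  by exists [::], p, a, b.
by exists (a :: s1), s2, u, v.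
Qed.

Lemma set2_inj (V : finType) (u v u' v' : V) : u != v -> [set u; v] = [set u'; v'] ->
  (u' = u /\ v' = v) \/ (u' = v /\ v' = u).
Proof.
move=> uv E; have := set21 u v; have := set22 u v; rewrite E !in_set2.
by do 2 case/orP => /eqP ?; subst; rewrite ?eqxx in uv; [case/negP: uv|right|left|case/negP: uv].
Qed.

Section Uncrossing.

Variables (V : finType) (G : rel V) (d : V).
Hypothesis Gsym : symmetric G.

Lemma spath_shorten W : sorted G W -> head d W != last d W ->
  exists W', [/\ spath G W', head d W' = head d W, last d W' = last d W & size W' <= size W].
Proof.
case: W => [|a w] /= sW; first by rewrite eqxx.
case: (shortenP sW) => w' sw' uw' sub aw'.
exists (a :: w'); split => //; last by rewrite /= ltnS uniq_leq_size //; case/andP: uw'.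
by rewrite /spath uw' /= sw' andbT; case: w' aw' {sw' uw' sub} => //=; rewrite eqxx.
Qed.

Lemma uncross_at P1 P2 Q1 Q2 u v
    (P := P1 ++ [:: u, v & P2]) (Q := Q1 ++ [:: u, v & Q2]) :
  sorted G P -> sorted G Q -> uniq (path_ends d [:: P; Q]) ->
  exists P' Q', [/\ spath G P', spath G Q',
    perm_eq (path_ends d [:: P'; Q']) (path_ends d [:: P; Q])
    & size P' + size Q' < size P + size Q].
Proof.
rewrite /P /Q !sorted_cat_cons => /andP [sP1 sP2] /andP [sQ1 sQ2].
rewrite /= !head_cat_cons !last_cat_cons /= => U.
(* Reroute at the shared edge: head P -> u -> head Q and last P -> v -> last Q. *)
have [||W1 [sW1 hW1 lW1 zW1]] := @spath_shorten (P1 ++ u :: rev Q1).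
- by rewrite sorted_cat_cons sP1 -rev_rcons sorted_rev_sym.
- rewrite head_cat_cons last_cat_cons last_rev.
  by move: U; rewrite /= !inE !negb_or => /and4P [/and3P []].
have [||W2 [sW2 hW2 lW2 zW2]] := @spath_shorten (rev P2 ++ v :: Q2).
- rewrite sorted_cat_cons (path_sorted sQ2) andbT -rev_cons sorted_rev_sym //.
  exact: path_sorted sP2.
- rewrite head_cat_cons last_cat_cons head_rev.
  by move: U; rewrite /= !inE !negb_or => /and4P [_ /andP []].
rewrite head_cat_cons last_cat_cons last_rev in hW1 lW1.
rewrite head_cat_cons last_cat_cons head_rev in hW2 lW2.
exists W1, W2; split => //; last by move: zW1 zW2; rewrite !size_cat /= !size_rev; lia.
rewrite /path_ends /= hW1 lW1 hW2 lW2 !head_cat_cons !last_cat_cons.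
by apply/permP => f /=; lia.
Qed.

Lemma uncross P Q : spath G P -> spath G Q -> ~~ edge_disjointb P Q ->
  uniq (path_ends d [:: P; Q]) ->
  exists P' Q', [/\ spath G P', spath G Q',
    perm_eq (path_ends d [:: P'; Q']) (path_ends d [:: P; Q])
    & size P' + size Q' < size P + size Q].
Proof.
move=> /and3P [_ uP sP] /and3P [_ _ sQ] /negPn /hasP [E].
move=> /mem_path_edges [P1 [P2 [u [v [eP eE]]]]].
move=> /mem_path_edges [Q1 [Q2 [u' [v' [eQ]]]]]; rewrite eE => eE' U.
have uv : u != v by move: uP; rewrite eP cat_uniq /= inE; case: eqP; rewrite ?andbF.
(* Reversing Q if necessary, both paths traverse the shared edge from u to v. *)
suff [Q0 [sQ0 eQ0 zQ0 [Q3 [Q4 dQ0]]]] : exists Q0, [/\ sorted G Q0,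
    perm_eq (path_ends d [:: P; Q0]) (path_ends d [:: P; Q]), size Q0 = size Q
    & exists Q3 Q4, Q0 = Q3 ++ [:: u, v & Q4]].
  have [|||P' [Q' [sP' sQ' pPQ zPQ]]] := @uncross_at P1 P2 Q3 Q4 u v.
  - by rewrite -eP.
  - by rewrite -dQ0.
  - by rewrite -eP -dQ0 (perm_uniq eQ0).
  by exists P', Q'; rewrite -eP -dQ0 zQ0 in pPQ zPQ; split => //; apply: perm_trans pPQ eQ0.
case: (set2_inj uv eE') => [[? ?]|[? ?]]; subst u' v' Q.
  by exists (Q1 ++ [:: u, v & Q2]); split => //; exists Q1, Q2.
exists (rev (Q1 ++ [:: v, u & Q2])); split.
- by rewrite sorted_rev_sym.
- by rewrite /path_ends /= head_rev last_rev; apply/permP => f /=; lia.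
- by rewrite size_rev.
by exists (rev Q2), (rev Q1); rewrite rev_cat !rev_cons -!cats1 -!catA.
Qed.

Lemma uncross_family ps : all (spath G) ps -> uniq (path_ends d ps) ->
  ~~ pairwise (@edge_disjointb V) ps ->
  exists ps', [/\ all (spath G) ps', perm_eq (path_ends d ps') (path_ends d ps),
    size ps' = size ps & total_size ps' < total_size ps].
Proof.
move=> sps ups /not_pairwise [P [Q [R [pps dPQ]]]].
have eR : forall P Q, [:: P, Q & R] = [:: P; Q] ++ R by [].
have := perm_all (spath G) pps; rewrite sps /= => /esym /and3P [sP sQ sR].
have ePQR := perm_path_ends d pps; rewrite eR path_ends_cat in ePQR.
have [|P' [Q' [sP' sQ' ePQ' zPQ']]] := uncross sP sQ dPQ.
  by move: ups; rewrite (perm_uniq ePQR) cat_uniq => /andP [].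
exists [:: P', Q' & R]; split.
- by rewrite /= sP' sQ'.
- by rewrite (permPr ePQR) eR path_ends_cat perm_cat2r.
- by rewrite (perm_size pps).
by rewrite /total_size (perm_sumn (perm_map size pps)) /= !addnA ltn_add2r.
Qed.

Lemma edge_disjoint_family ps : all (spath G) ps -> uniq (path_ends d ps) ->
  exists ps', [/\ all (spath G) ps', perm_eq (path_ends d ps') (path_ends d ps),
    size ps' = size ps & pairwise (@edge_disjointb V) ps'].
Proof.
have [n] := ubnP (total_size ps); elim: n ps => // n IH ps /ltnSE zps sps ups.
have [dps|] := boolP (pairwise (@edge_disjointb V) ps); first by exists ps.
case/(uncross_family sps ups) => ps1 [sps1 e1 z1 lt1].
have [|||ps' [sps' e' z' dps']] := IH ps1; rewrite ?(perm_uniq e1) //.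
  exact: leq_trans lt1 zps.
by exists ps'; rewrite (perm_trans e' e1) z' z1.
Qed.

End Uncrossing.

Lemma connect_spath (V : finType) (G : rel V) d a b : connect G a b -> a != b ->
  exists p, [/\ spath G p, head d p = a & last d p = b].
Proof.
case/connectP => s sp -> ab.
by have [W [sW hW lW _]] := @spath_shorten V G d (a :: s) sp ab; exists W.
Qed.

Lemma spath_connect (V : finType) (G : rel V) d p : spath G p -> connect G (head d p) (last d p).
Proof. by case: p => [|a s] /and3P [_ _ sp] //; apply/connectP; exists s. Qed.

Lemma sub_spath (V : finType) (G G' : rel V) : subrel G G' -> subpred (spath G) (spath G').
Proof. by move=> GG' p /and3P [? ? /(sub_sorted GG') ?]; apply/and3P. Qed.

Lemma spath_endpoint (V : finType) (G : rel V) d p v : spath G p ->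
  v \in [:: head d p; last d p] -> endpoint v p.
Proof.
case/lastP: p => [|m b] /and3P [zp _ _] //; rewrite last_rcons !inE => /orP [] /eqP ->.
  by exists (behead (rcons m b)); left; case: (m).
by exists m; right.
Qed.

Lemma pairing_paths (V : finType) (G : rel V) d l : uniq l -> {in l &, forall a b, connect G a b} ->
  exists ps, [/\ all (spath G) ps, path_ends d ps = take ((size l)./2).*2 l
    & size ps = (size l)./2].
Proof.
have [n] := ubnP (size l); elim: n l => // n IH [|a [|b l]] /= zl; try by exists [::].
rewrite inE negb_or -andbA => /and4P [ab _ _ ul] cl.
have bl : b \in [:: a, b & l] by rewrite in_cons mem_head orbT.
have [p [sp hp lp]] := connect_spath d (cl a b (mem_head _ _) bl) ab.
have [|||ps [sps eps zps]] := IH l; rewrite ?ul //; first by rewrite -ltnS ltnW.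
  by move=> u v ul' vl'; apply: cl; rewrite !inE ?ul' ?vl' ?orbT.
by exists ([:: p] ++ ps); rewrite path_ends_cat /= sp sps zps eps hp lp.
Qed.

Lemma set_pairing_paths (V : finType) (G : rel V) d (A : {set V}) a :
  a \in A -> 1 < #|A| -> {in A &, forall u v, connect G u v} ->
  exists ps, [/\ all (spath G) ps, uniq (path_ends d ps), {subset path_ends d ps <= A},
    a \in path_ends d ps & size ps = #|A|./2].
Proof.
move=> aA A2 cA; set l := a :: enum (A :\ a).
have ul : uniq l by rewrite /= mem_enum !inE eqxx enum_uniq.
have lA : l =i A by move=> v; rewrite !inE mem_enum !inE; case: eqVneq => // ->.
have zl : size l = #|A| by rewrite /= -cardE (cardsD1 a A) aA.
have [|ps [sps eps zps]] := pairing_paths (G := G) d ul.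
  by move=> u v; rewrite !lA; apply: cA.
exists ps; rewrite eps zps zl take_uniq //; split => // [v /mem_take|]; first by rewrite lA.
by move: A2; rewrite -half_gt0 -double_gt0; case: (_.*2) => //= k _; apply: mem_head.
Qed.

Lemma connect_endpoints (V : finType) (G : rel V) d p u v : symmetric G -> spath G p ->
  u \in [:: head d p; last d p] -> v \in [:: head d p; last d p] -> connect G u v.
Proof.
move=> /sym_connect_sym Gc /(spath_connect d) hl.
by rewrite !inE => /orP [] /eqP -> /orP [] /eqP ->; rewrite // Gc.
Qed.

Lemma two_class_paths (V : finType) (G : rel V) d (A B : {set V}) x y : symmetric G ->
  {in A &, forall u v, connect G u v} -> {in B &, forall u v, connect G u v} ->
  x \in A -> y \in B -> 1 < #|A| -> 1 < #|B| -> ~~ connect G x y ->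
  exists Ls, [/\ all (spath G) Ls, pairwise (@edge_disjointb V) Ls,
    size Ls = #|A|./2 + #|B|./2, {subset path_ends d Ls <= A :|: B}
    & x \in [:: head d (nth [::] Ls 0); last d (nth [::] Ls 0)] /\
      y \in [:: head d (nth [::] Ls 1); last d (nth [::] Ls 1)]].
Proof.
move=> Gsym cA cB xA yB A2 B2 nxy.
have AB v : v \in A -> v \notin B.
  by move=> vA; apply: contra nxy => vB; apply: connect_trans (cA x v xA vA) (cB v y vB yB).
have [psx [sx ux subx xx zx]] := set_pairing_paths (G := G) d xA A2 cA.
have [psy [sy uy suby yy zy]] := set_pairing_paths (G := G) d yB B2 cB.
have [||ps [sps eps zps dps]] := @edge_disjoint_family V G d Gsym (psx ++ psy).
- by rewrite all_cat sx sy.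
- rewrite path_ends_cat cat_uniq ux uy andbT; apply/hasPn => v /suby vB.
  by apply/negP => /subx /AB; rewrite vB.
have endsP v : (v \in path_ends d ps) = (v \in path_ends d psx) || (v \in path_ends d psy).
  by rewrite (perm_mem eps) path_ends_cat mem_cat.
have /path_endsP [px pxs xpx] : x \in path_ends d ps by rewrite endsP xx.
have /path_endsP [py pys ypy] : y \in path_ends d ps by rewrite endsP yy orbT.
have pxy : px != py.
  apply: contra nxy => /eqP pxy; rewrite pxy in xpx.
  exact: connect_endpoints Gsym (allP sps _ pys) xpx ypy.
have eLs : perm_eq ps [:: px, py & rem py (rem px ps)].
  apply: perm_trans (perm_to_rem pxs) _; rewrite perm_cons perm_to_rem //.
  by rewrite (perm_mem (perm_to_rem pxs)) in pys; move: pys; rewrite inE eq_sym (negbTE pxy).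
exists [:: px, py & rem py (rem px ps)]; split => //.
- by rewrite -(perm_all _ eLs).
- by rewrite -(perm_pairwise_sym (@edge_disjointbC V) eLs).
- by rewrite -(perm_size eLs) zps size_cat zx zy.
move=> v; rewrite -(perm_mem (perm_path_ends d eLs)) endsP in_setU.
by case/orP => [/subx|/suby] ->; rewrite ?orbT.
Qed.

Definition acyclic (V : finType) (e : rel V) : Prop :=
  forall c : seq V, uniq c -> 3 <= size c -> ~~ cycle e c.

Definition remove_edge (V : finType) (e : rel V) (z1 z2 : V) : rel V :=
  fun a b => e a b && ([set a; b] != [set z1; z2]).

Lemma acyclic_sub (V : finType) (e e' : rel V) : subrel e' e -> acyclic e -> acyclic e'.
Proof. by move=> e'e eac c uc zc; apply: contra (eac c uc zc); apply: sub_cycle. Qed.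

Lemma acyclic_chord (V : finType) (G : rel V) z pz rest w : symmetric G -> acyclic G ->
  uniq [:: z, pz & rest] -> path G z (pz :: rest) -> w \in rest -> ~~ G z w.
Proof.
move=> Gsym Gac u zp wr; case/splitPr: wr u zp => r1 r2 u zp; apply/negP => Gzw.
have uc : uniq [:: z, pz & rcons r1 w].
  by move: u; rewrite -cats1 -!cat_cons -(cat1s w r2) catA cat_uniq => /andP [].
have := Gac _ uc; rewrite /= size_rcons => /(_ isT) /negP; apply.
rewrite rcons_path last_rcons (Gsym w) Gzw andbT.
by move: zp; rewrite -(cat1s w r2) -cat_cons catA cat_path cats1 => /andP [].
Qed.

Lemma extend_path_front (V : finType) (G : rel V) s :
  symmetric G -> irreflexive G -> acyclic G -> 1 < size s -> uniq s -> sorted G s ->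
  exists l z pz rest, [/\ l ++ s = [:: z, pz & rest], uniq [:: z, pz & rest],
    path G z (pz :: rest) & forall w, G z w -> w = pz].
Proof.
move=> Gsym Girr Gac; have [n] := ubnP (#|V| - size s); elim: n s => // n IH s.
case: s => [|z [|pz rest]] // zs _ us ss.
have [w /andP [Gzw wpz]|zend] := pickP [pred w | G z w && (w != pz)]; last first.
  by exists [::], z, pz, rest; split => // w Gzw; have := zend w; rewrite /= Gzw => /negbFE /eqP.
have ws : w \notin [:: z, pz & rest].
  rewrite !inE (negbTE wpz) /=; apply/orP => -[/eqP wz|wr]; first by rewrite wz Girr in Gzw.
  exact: negP (acyclic_chord Gsym Gac us ss wr) Gzw.
have uws : uniq [:: w, z, pz & rest] by rewrite /= ws.
have [||||l [z' [pz' [rest' [E u' p' zend']]]]] := IH [:: w, z, pz & rest] => //.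
- by have := max_card (mem [:: w, z, pz & rest]); rewrite (card_uniqP uws) /=; move: zs => /=; lia.
- by rewrite /= Gsym Gzw.
by exists (rcons l w), z', pz', rest'; rewrite cat_rcons.
Qed.

Section RemoveEdge.

Variables (V : finType) (e : rel V).
Hypothesis esym : symmetric e.
Hypothesis eirr : irreflexive e.

Lemma remove_edge_sym z1 z2 : symmetric (remove_edge e z1 z2).
Proof. by move=> a b; rewrite /remove_edge esym setUC. Qed.

Lemma remove_edge_sub z1 z2 : subrel (remove_edge e z1 z2) e.
Proof. by move=> a b; rewrite /remove_edge => /andP []. Qed.

Lemma remove_edgeC z1 z2 : remove_edge e z1 z2 =2 remove_edge e z2 z1.
Proof. by move=> a b; rewrite /remove_edge (setUC [set z1]). Qed.

Lemma remove_edge_free z1 z2 a b : e a b -> z1 != a -> z1 != b -> remove_edge e z1 z2 a b.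
Proof.
move=> eab z1a z1b; rewrite /remove_edge eab; apply: contraNneq (_ : z1 \notin [set a; b]) => [->|].
  by rewrite set21.
by rewrite in_set2 negb_or z1a z1b.
Qed.

Lemma path_remove_edge z1 z2 a s :
  path e a s -> z1 \notin a :: s -> path (remove_edge e z1 z2) a s.
Proof.
elim: s a => //= b s IH a /andP [eab abs]; rewrite !inE !negb_or => /and3P [z1a z1b z1s].
by rewrite remove_edge_free ?IH // inE negb_or z1b.
Qed.

Lemma remove_edge_leaf z1 z2 z pz : deg e z != 2 -> remove_edge e z1 z2 z pz ->
  (forall w, remove_edge e z1 z2 z w -> w = pz) -> is_leaf e z.
Proof.
(* Besides pz, the only possible neighbour of z is the other end [o] of the removed edge. *)
move=> d2 zpz zend; set o := if z == z1 then z2 else z1.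
have Nz : [set w | e z w] \subset [set pz; o].
  apply/subsetP => w; rewrite !inE => ezw.
  have [E|ne] := eqVneq [set z; w] [set z1; z2].
    have zw : z != w by apply: contraTneq ezw => ->; rewrite eirr.
    by rewrite /o; case: (set2_inj zw E) => -[-> ->]; rewrite ?eqxx ?(negbTE zw) /= ?eqxx ?orbT.
  by rewrite (zend w) ?eqxx //; apply/andP.
have := subset_leq_card Nz; rewrite cards2 /is_leaf /deg.
have : 0 < #|[set w | e z w]| by apply/card_gt0P; exists pz; rewrite inE; case/andP: zpz.
by move: d2; rewrite /deg; case: (pz != o); lia.
Qed.

Lemma third_nbr v a b c1 c2 : deg e v != 2 -> e v a -> e v b -> a != b ->
  exists r, [/\ e v r, r != c1 & r != c2].
Proof.
move=> d2 va vb ab.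
have : #|[set a; b]| <= deg e v.
  by apply/subset_leq_card/subsetP => w; rewrite !inE => /orP [] /eqP ->.
have := subset_leq_card (subsetIr [set w | e v w] [set c1; c2]).
rewrite !cards2 ab /= => c12 N2.
have /card_gt0P [r] : 0 < #|[set w | e v w] :\: [set c1; c2]|.
  by rewrite cardsD; move: d2 N2 c12; rewrite /deg; case: (c1 != c2); lia.
by rewrite !inE negb_or => /andP [/andP [? ?] ?]; exists r.
Qed.

Lemma leaf_nbr_uniq v a b : is_leaf e v -> e v a -> e v b -> a = b.
Proof.
rewrite /is_leaf /deg => /cards1P [w Nv] va vb.
have : a \in [set w | e v w] by rewrite inE.
have : b \in [set w | e v w] by rewrite inE.
by rewrite Nv !inE => /eqP -> /eqP ->.
Qed.

End RemoveEdge.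

Section Tree.

Variables (V : finType) (e : rel V).
Hypothesis esym : symmetric e.
Hypothesis eirr : irreflexive e.
Hypothesis eacyc : acyclic e.
Hypothesis edeg : forall v, deg e v != 2.
Hypothesis econn : forall u v, connect e u v.

Lemma spath_leaf_to_leaf d p : spath e p ->
  is_leaf e (head d p) -> is_leaf e (last d p) -> leaf_to_leaf_path e p.
Proof.
case/lastP: p => [|p b] /and3P [zp up sp] //; case: p zp up sp => [|a m] // _ up sp.
rewrite /= last_rcons => la lb; exists a, b, m; split => //.
have ab : a != b by move: up; rewrite /= mem_rcons inE negb_or => /andP [/andP []].
do 4!split => //; apply/allP => v vm; apply/negP => lv.
case/splitPr: vm up sp => m1 m2; rewrite rcons_cons rcons_cat => up sp.
move: up; rewrite -cat_cons cat_uniq => /and3P [_ /hasP nuv _].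
move: sp; rewrite /= cat_path => /andP [_ /= /andP [pv vm2]].
apply: nuv; exists (last a m1); last first.
  exact: mem_last.
have vs : e v (head b m2) by case: (m2) vm2 => [|c m2'] /= /andP [].
have vp : e v (last a m1) by rewrite esym.
rewrite (leaf_nbr_uniq lv vp vs).
by case: (m2) => [|c m2'] /=; rewrite in_cons mem_head orbT.
Qed.

Lemma leaf_beyond z1 z2 a b r :
  uniq [:: r; b; a] -> sorted (remove_edge e z1 z2) [:: r; b; a] ->
  exists z, [/\ is_leaf e z, z != a & connect (remove_edge e z1 z2) a z].
Proof.
set G := remove_edge e z1 z2 => u s.
have Gsym : symmetric G := remove_edge_sym esym z1 z2.
have Girr : irreflexive G by move=> v; rewrite /G /remove_edge eirr.
have Gac : acyclic G := acyclic_sub (@remove_edge_sub V e z1 z2) eacyc.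
have [l [z [pz [rest [E u' p' zend]]]]] :=
  @extend_path_front V G [:: r; b; a] Gsym Girr Gac isT u s.
have la : last z (pz :: rest) = a by rewrite -[last z _]/(last r [:: z, pz & rest]) -E last_cat.
exists z; split.
- by apply: (remove_edge_leaf (z1 := z1) (z2 := z2) eirr (edeg z) _ zend); case/andP: p'.
- by apply: contraTneq u' => ->; rewrite /= -{1}la /= mem_last.
by rewrite (sym_connect_sym Gsym); apply/connectP; exists (pz :: rest).
Qed.

Lemma other_leaf z1 z2 a b c : e b a -> e b c -> a != c -> a != z1 -> b != z1 ->
  exists z, [/\ is_leaf e z, z != a & connect (remove_edge e z1 z2) a z].
Proof.
move=> ba bc ac az bz; have [r [br ra rz]] := third_nbr a z1 (edeg b) ba bc ac.
have neq u v : e u v -> u != v by apply: contraTneq => ->; rewrite eirr.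
apply: (@leaf_beyond _ _ _ b r).
  by rewrite /= !inE negb_or ra neq ?(esym r) // neq.
by rewrite /= !remove_edge_free ?(esym r) // eq_sym.
Qed.

Lemma remove_edge_disconnects z1 z2 : e z1 z2 -> ~~ connect (remove_edge e z1 z2) z1 z2.
Proof.
move=> e12; apply/negP => c12.
have z12 : z1 != z2 by apply: contraTneq e12 => ->; rewrite eirr.
have [p [sp hp lp]] := connect_spath z1 c12 z12.
case: p sp hp lp => [|a [|b [|c p]]] // /and3P [_ up sp] /= az1 lp; subst a.
  by move: sp; rewrite /= lp /remove_edge eqxx andbF.
have := eacyc up isT; rewrite /cycle rcons_path (sub_path (@remove_edge_sub V e z1 z2) sp) /=.
by rewrite lp esym e12.
Qed.

Lemma remove_edge_connect_ends z1 z2 v :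
  connect (remove_edge e z1 z2) z1 v || connect (remove_edge e z1 z2) z2 v.
Proof.
set G := remove_edge e z1 z2; set Q := [pred w | connect G z1 w || connect G z2 w].
have clQ : closed e Q.
  apply: (intro_closed (sym_connect_sym esym)) => a b eab; rewrite !inE.
  have [E _|ne] := eqVneq [set a; b] [set z1; z2].
    by have := set22 a b; rewrite E in_set2 => /orP [] /eqP ->; rewrite connect0 ?orbT.
  have Gab : G a b by rewrite /G /remove_edge eab ne.
  by case/orP => c; rewrite (connect_trans c (connect1 Gab)) ?orbT.
by rewrite -[_ || _]/(v \in Q) -(closed_connect clQ (econn z1 v)) inE connect0.
Qed.

Lemma adjacent_leaves_card x y : is_leaf e x -> is_leaf e y -> e x y -> #|leaves e| <= 2.
Proof.
move=> xl yl exy.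
have clxy : closed e (mem [set x; y]).
  apply: (intro_closed (sym_connect_sym esym)) => a b eab; rewrite !inE.
  by case/orP => /eqP ab; subst a; [rewrite (leaf_nbr_uniq xl eab exy) eqxx orbT
    | rewrite (leaf_nbr_uniq yl eab (etrans (esym y x) exy)) eqxx].
apply: leq_trans (subset_leq_card (subsetT (leaves e))) _.
have -> : [set: V] = [set x; y].
  by apply/setP => v; rewrite inE -(closed_connect clxy (econn x v)) set21.
by rewrite cards2; case: (x != y).
Qed.

Lemma last_two d L : spath e L -> 2 < size L ->
  exists t1 t2, [/\ e (last d L) t1, e t1 t2 & t2 != last d L].
Proof.
case/and3P => _ uL sL zL; rewrite -head_rev.
have : sorted e (rev L) by rewrite sorted_rev_sym.
have : uniq (rev L) by rewrite rev_uniq.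
have : 2 < size (rev L) by rewrite size_rev.
case: (rev L) => [|y [|t1 [|t2 r]]] //= _ /andP [+ /andP [+ _]] /and3P [yt1 t12 _].
by rewrite !inE !negb_or => /and3P [_ yt2 _] _; exists t1, t2; rewrite eq_sym.
Qed.

Lemma split_at_second_edge x z1 z2 s (y := last z2 s) (G := remove_edge e z1 z2) :
  spath e [:: x, z1, z2 & s] -> is_leaf e x -> is_leaf e y -> ~ cherry e x y ->
  [/\ ~~ connect G x y, forall v, connect G x v || connect G y v,
      exists x2, [/\ is_leaf e x2, x2 != x & connect G x x2]
    & exists y2, [/\ is_leaf e y2, y2 != y & connect G y y2]].
Proof.
move=> sp xl yl nch; have [t1 [t2 [yt1 t12 t2y]]] := last_two x sp isT.
case/and3P: sp => _ + /and3P [xz1 z12 z2s].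
rewrite /= !inE !negb_or => /and4P [/and3P [xz1' xz2 _] /andP [z12' z1s] _ _].
have {}z1s : z1 \notin z2 :: s by rewrite inE negb_or z12'.
have yz1 : y != z1 by apply: contraNneq z1s => <-; apply: mem_last.
have t1z1 : t1 != z1.
  by apply: contra_not_neq nch => t1z1; subst t1; do 2!split => //; exists z1.
have Gc : connect_sym G := sym_connect_sym (remove_edge_sym esym z1 z2).
have cxz1 : connect G x z1.
  by apply: connect1; rewrite /G remove_edgeC remove_edge_free // eq_sym.
have cz2y : connect G z2 y.
  by apply/connectP; exists s => //; apply: path_remove_edge.
split.
- apply: contra (remove_edge_disconnects z12) => cxy.
  by apply: connect_trans (connect_trans cxy _); rewrite Gc.
- move=> v; case/orP: (remove_edge_connect_ends z1 z2 v) => c.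
    by rewrite (connect_trans cxz1 c).
  by rewrite Gc in cz2y; rewrite (connect_trans cz2y c) orbT.
- have [x2 ?] := other_leaf (z1 := z2) z1 (etrans (esym z1 x) xz1) z12 xz2 xz2 z12'.
  by exists x2; rewrite /G (eq_connect (remove_edgeC e z1 z2)).
have yt2 : y != t2 by rewrite eq_sym.
by have [y2 ?] := other_leaf z2 (etrans (esym t1 y) yt1) t12 yt2 yz1 t1z1; exists y2.
Qed.

End Tree.

Lemma halves_lower_bound a b : 1 < a -> 1 < b -> maxn 2 ((a + b - 1) %/ 2) <= a./2 + b./2.
Proof. rewrite -!divn2; lia. Qed.

Lemma leaf_paths_of_split (V : finType) (e G : rel V) x y :
  symmetric e -> symmetric G -> subrel G e -> is_leaf e x -> is_leaf e y ->
  ~~ connect G x y -> (forall v, connect G x v || connect G y v) ->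
  (exists x2, [/\ is_leaf e x2, x2 != x & connect G x x2]) ->
  (exists y2, [/\ is_leaf e y2, y2 != y & connect G y y2]) ->
  let q := maxn 2 ((#|leaves e| - 1) %/ 2) in
  exists P : nat -> seq V,
    (forall i, i < q -> leaf_to_leaf_path e (P i)) /\
    (forall i j, i < q -> j < q -> i != j -> edge_disjoint (P i) (P j)) /\
    endpoint x (P 0) /\ endpoint y (P 1).
Proof.
move=> esym Gsym Ge xl yl nxy cover [x2 [x2l x2x xx2]] [y2 [y2l y2y yy2]] q.
have Gc := sym_connect_sym Gsym.
set A := [set v | is_leaf e v && connect G x v].
set B := [set v | is_leaf e v && connect G y v].
have cA : {in A &, forall u v, connect G u v}.
  move=> u v; rewrite !inE => /andP [_ xu] /andP [_ xv].
  by rewrite Gc in xu; apply: connect_trans xv.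
have cB : {in B &, forall u v, connect G u v}.
  move=> u v; rewrite !inE => /andP [_ yu] /andP [_ yv].
  by rewrite Gc in yu; apply: connect_trans yv.
have xA : x \in A by rewrite inE xl connect0.
have yB : y \in B by rewrite inE yl connect0.
have A2 : 1 < #|A| by apply/card_gt1P; exists x, x2; rewrite xA inE x2l xx2 eq_sym x2x.
have B2 : 1 < #|B| by apply/card_gt1P; exists y, y2; rewrite yB inE y2l yy2 eq_sym y2y.
have leavesAB : leaves e = A :|: B by apply/setP => v; rewrite !inE -andb_orr cover andbT.
have AB : A :&: B = set0.
  apply/setP => v; rewrite !inE; apply/negP => /andP [/andP [_ xv] /andP [_ yv]].
  by rewrite Gc in yv; case/negP: nxy; apply: connect_trans xv yv.
have [Ls [sLs dLs zLs eLs [xLs yLs]]] := two_class_paths x Gsym cA cB xA yB A2 B2 nxy.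
have qLs : q <= size Ls.
  by rewrite zLs /q leavesAB cardsU AB cards0 subn0 halves_lower_bound.
have leaf_ends p : p \in Ls -> is_leaf e (head x p) /\ is_leaf e (last x p).
  have leafAB v : v \in A :|: B -> is_leaf e v by rewrite !inE => /orP [] /andP [].
  by move=> pLs; split; [apply: (leafAB (head x p)) | apply: (leafAB (last x p))];
    apply/eLs/path_endsP; exists p; rewrite // !inE eqxx ?orbT.
have nthLs i : i < q -> nth [::] Ls i \in Ls by move=> iq; apply/mem_nth/(leq_trans iq qLs).
exists (nth [::] Ls); split; [|split; [|split]].
- move=> i /nthLs iLs; have [hl ll] := leaf_ends _ iLs.
  exact: (@spath_leaf_to_leaf V e esym x _ (sub_spath Ge (allP sLs _ iLs)) hl ll).
- move=> i j iq jq.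
  exact: pairwise_nth_sym (@edge_disjointbC V) dLs (leq_trans iq qLs) (leq_trans jq qLs).
- by apply: spath_endpoint xLs; apply: (allP sLs); apply: nthLs; rewrite leq_max.
by apply: spath_endpoint yLs; apply: (allP sLs); apply: nthLs; rewrite leq_max.
Qed.

Theorem lemma3 (V : finType) (e : rel V) (x y : V) :
  binary_phylo_tree e ->
  3 <= #|leaves e| ->
  x \in leaves e -> y \in leaves e -> x != y ->
  ~ cherry e x y ->
  let q := maxn 2 ((#|leaves e| - 1) %/ 2) in
  exists P : nat -> seq V,
    (forall i, i < q -> leaf_to_leaf_path e (P i)) /\
    (forall i j, i < q -> j < q -> i != j -> edge_disjoint (P i) (P j)) /\
    endpoint x (P 0) /\ endpoint y (P 1).
Proof.
move=> [[[esym eirr] [econn eacyc]] edeg] L3; rewrite !inE => xl yl xy nch.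
have edeg2 v : deg e v != 2 := (edeg v).1.
have [p [sp hp lp]] := connect_spath x (econn x y) xy.
case: p sp hp lp => [|x' [|z1 [|z2 s]]] // sp /= hp lp; subst x'.
  move: sp => /and3P [_ _ /= /andP [exy _]]; rewrite lp in exy.
  by move: L3; rewrite leqNgt ltnS (adjacent_leaves_card esym econn xl yl exy).
rewrite -lp in yl nch *.
have [nxy cover xx2 yy2] := split_at_second_edge esym eirr eacyc edeg2 econn sp xl yl nch.
exact: leaf_paths_of_split esym (remove_edge_sym esym z1 z2) (@remove_edge_sub V e z1 z2)
  xl yl nxy cover xx2 yy2.
Qed.
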